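(* Let $\mathrm{X}$ be a compact Hausdorff space and $g_0,f\in C(\mathrm{X})_+^{-1}$. Then $$\lim_{n\to\infty}\Big(\big\|(ng_0^{-1}+f^{-1})^{-1}\big\|^{-1}-n\|g_0\|^{-1}\Big)^{-1}=\max\{f(x): x\in\operatorname{pk}(g_0)\}.$$
   Context: $C(\mathrm{X})_+^{-1}$ is the set of strictly positive continuous functions on $\mathrm{X}$, with sup-norm $\|\cdot\|$; $h^{-1}=1/h$ pointwise; $\operatorname{pk}(g)=\{x\in\mathrm{X}: g(x)=\|g\|\}$. *)

From HB Require Import structures.
From mathcomp Require Import all_boot all_order all_algebra.
From mathcomp Require Import all_classical all_reals all_analysis.
Set Implicit Arguments. Unset Strict Implicit. Unset Printing Implicit Defensive.
Import Order.TTheory GRing.Theory Num.Theory.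
Import numFieldNormedType.Exports.
Local Open Scope classical_set_scope.
Local Open Scope ring_scope.

Definition supnorm (R : realType) (X : Type) (h : X -> R) : R :=
  sup [set `|h x| | x in [set: X]].

Definition pk (R : realType) (X : Type) (g : X -> R) : set X :=
  [set x | g x = supnorm g].

(* C(X)_+^{-1}: strictly positive continuous functions *)
Definition pos_cont (R : realType) (X : topologicalType) (h : X -> R) : Prop :=
  continuous h /\ forall x, 0 < h x.

From HB Require Import structures.
From mathcomp Require Import all_boot all_order all_algebra.
From mathcomp Require Import all_classical all_reals all_analysis.
From mathcomp Require Import ring lra.
Set Implicit Arguments. Unset Strict Implicit. Unset Printing Implicit Defensive.
Import Order.TTheory GRing.Theory Num.Theory.
Import numFieldNormedType.Exports.
Local Open Scope classical_set_scope.
Local Open Scope ring_scope.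

(* Write M = ||g0||, phi = g0^-1 - M^-1 >= 0 and psi = f^-1.
   Since ||h^-1||^-1 = min h for a positive continuous h on a compact space,
     a_n := ||(n g0^-1 + f^-1)^-1||^-1 - n M^-1 = min_x (n phi x + psi x),
   and phi vanishes exactly on pk(g0).  The heart of the proof is a
   "penalty method" lemma: on a compact space, for continuous phi >= 0 and
   psi, min (n phi + psi) converges to the minimum of psi on the zero set of
   phi.  The lower bound rests on a gap estimate: phi is bounded below by a
   positive constant on the compact set where psi is eps below that minimum.
   The minimum of psi = f^-1 on pk(g0) is f(xm)^-1, where xm maximizes f on
   the compact set pk(g0); inverting the limit gives the theorem. *)

Lemma supnorm_maxE (R : realType) (X : Type) (h : X -> R) (y : X) :
  (forall x, 0 <= h x) -> (forall x, h x <= h y) -> supnorm h = h y.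
Proof.
move=> h_ge0 h_le; have hyE : `|h y| = h y by rewrite ger0_norm.
have ub : forall r, [set `|h x| | x in [set: X]] r -> r <= h y.
  by move=> _ [x _ <-]; rewrite ger0_norm.
apply/eqP; rewrite eq_le; apply/andP; split.
  by apply: ge_sup; [exists `|h y|, y | exact: ub].
rewrite -{1}hyE; apply: sup_upper_bound; last by exists y.
by split; [exists `|h y|, y | exists (h y)].
Qed.

Lemma pos_cont_inv (R : realType) (X : topologicalType) (h : X -> R) :
  pos_cont h -> pos_cont (fun x => (h x)^-1).
Proof.
move=> [hc hp]; split=> [x|x]; last by rewrite invr_gt0.
by apply: continuousV; [rewrite gt_eqF | exact: hc].
Qed.

Section CompactExtrema.
Variables (R : realType) (X : topologicalType).
Hypothesis cX : compact [set: X].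

Lemma closed_argmin (A : set X) (h : X -> R) :
  closed A -> A !=set0 -> continuous h ->
  exists2 y, A y & forall x, A x -> h y <= h x.
Proof.
move=> clA A0 hc.
have [y Ay hy] := compact_EVT_min A0 (subclosed_compact clA cX (@subsetT _ A))
  (continuous_subspaceT hc).
by exists y => [|x Ax]; [rewrite -inE | apply: hy; rewrite inE].
Qed.

Lemma closed_argmax (A : set X) (h : X -> R) :
  closed A -> A !=set0 -> continuous h ->
  exists2 y, A y & forall x, A x -> h x <= h y.
Proof.
move=> clA A0 hc.
have [y Ay hy] := compact_EVT_max A0 (subclosed_compact clA cX (@subsetT _ A))
  (continuous_subspaceT hc).
by exists y => [|x Ax]; [rewrite -inE | apply: hy; rewrite inE].
Qed.

Lemma supnorm_attained (x0 : X) (g : X -> R) :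
  continuous g -> (forall x, 0 <= g x) ->
  exists y, supnorm g = g y /\ forall x, g x <= g y.
Proof.
move=> gc g_ge0; have [y _ hy] := closed_argmax closedT (ex_intro _ x0 I) gc.
have g_le x : g x <= g y by exact: hy.
by exists y; split=> //; exact: supnorm_maxE.
Qed.

Lemma closed_pk (g : X -> R) : continuous g -> closed (pk g).
Proof.
move=> gc; apply: (@preimage_closed _ _ g [set r | r = supnorm g]).
  by move=> x _; exact: gc.
exact: closed_eq.
Qed.

Lemma inv_supnorm_inv (x0 : X) (q : X -> R) : pos_cont q ->
  exists y, (supnorm (fun x => (q x)^-1))^-1 = q y /\ forall x, q y <= q x.
Proof.
move=> qpos; have [qc qp] := qpos.
have [y _ hy] := closed_argmin closedT (ex_intro _ x0 I) qc.
exists y; split=> [|x]; last exact: hy.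
rewrite (@supnorm_maxE _ _ _ y) ?invrK // => x.
  by rewrite invr_ge0 ltW.
by rewrite lef_pV2 ?posrE // hy.
Qed.

Lemma shifted_min_repr (x0 : X) (g f : X -> R) (c : R) (n : nat) :
  pos_cont g -> pos_cont f ->
  exists y,
    (supnorm (fun x => (n%:R * (g x)^-1 + (f x)^-1)^-1))^-1 - n%:R * c
      = n%:R * ((g y)^-1 - c) + (f y)^-1
    /\ forall x,
      (supnorm (fun x => (n%:R * (g x)^-1 + (f x)^-1)^-1))^-1 - n%:R * c
        <= n%:R * ((g x)^-1 - c) + (f x)^-1.
Proof.
move=> /pos_cont_inv [gVc gVp] /pos_cont_inv [fVc fVp].
have qpos : pos_cont (fun x => n%:R * (g x)^-1 + (f x)^-1).
  split=> [x|x]; last by rewrite ltr_wpDl // mulr_ge0 // ltW.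
  by apply: cvgD; [apply: cvgMl_tmp; exact: gVc | exact: fVc].
have [y [-> ymin]] := inv_supnorm_inv x0 qpos.
exists y; split=> [|x]; first by ring.
by have := ymin x; lra.
Qed.

End CompactExtrema.

Section Penalty.
Variables (R : realType) (X : topologicalType).
Hypothesis cX : compact [set: X].
Variables (phi psi : X -> R).
Hypotheses (phic : continuous phi) (psic : continuous psi).
Hypothesis phi_ge0 : forall x, 0 <= phi x.

Lemma penalty_gap (m eps : R) : 0 < eps ->
  (forall x, phi x = 0 -> m <= psi x) ->
  exists2 d, 0 < d & forall x, psi x <= m - eps -> d <= phi x.
Proof.
move=> eps_gt0 zero_ge.
have [[x1 hx1]|noK] := pselect (exists x, psi x <= m - eps); last first.
  by exists 1 => // x hx; exfalso; apply: noK; exists x.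
have clK : closed (psi @^-1` [set r | r <= m - eps]).
  by apply: preimage_closed; [move=> x _; exact: psic | exact: closed_le].
have [c cK cmin] := closed_argmin cX clK (ex_intro _ x1 hx1) phic.
exists (phi c) => //; rewrite lt_neqAle phi_ge0 andbT eq_sym.
apply/negP => /eqP /zero_ge; move: cK => /=; lra.
Qed.

Lemma penalty_limit (xm : X) (a : nat -> R) :
  phi xm = 0 -> (forall x, phi x = 0 -> psi xm <= psi x) ->
  (forall n, exists y, a n = n%:R * phi y + psi y
                       /\ forall x, a n <= n%:R * phi x + psi x) ->
  a @ \oo --> psi xm.
Proof.
move=> phi_xm xm_min a_min; apply/cvgrPdist_le => eps eps_gt0.
have [d d_gt0 gap] := penalty_gap eps_gt0 xm_min.
have [z _ zmin] := closed_argmin cX closedT (ex_intro _ xm I) psic.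
have psi_gap_ge0 : 0 <= (psi xm - psi z) / d.
  by rewrite divr_ge0 ?subr_ge0 ?zmin ?ltW.
near=> n.
have n_big : (psi xm - psi z) / d <= n%:R by near: n; exact: nbhs_infty_ger.
have [y [-> ymin]] := a_min n.
have a_le : n%:R * phi y + psi y <= psi xm.
  by have := ymin xm; rewrite phi_xm mulr0 add0r.
rewrite ger0_norm ?subr_ge0 //.
have nphi_ge0 : 0 <= n%:R * phi y by rewrite mulr_ge0.
have [/gap d_le|] := lerP (psi y) (psi xm - eps); last by lra.
have : (psi xm - psi z) / d * d <= n%:R * phi y.
  by rewrite ler_pM // ltW.
have := zmin y I; rewrite divfK ?gt_eqF //; lra.
Unshelve. all: by end_near.
Qed.

End Penalty.

Theorem mainTheorem15 (R : realType) (X : topologicalType)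
  (cX : compact [set: X]) (hX : hausdorff_space X) (x_0 : X)
  (g0 f : X -> R) (hg0 : pos_cont g0) (hf : pos_cont f) :
  exists2 xm : X, pk g0 xm /\ (forall x, pk g0 x -> f x <= f xm) &
    (fun n : nat =>
       ((supnorm (fun x => (n%:R * (g0 x)^-1 + (f x)^-1)^-1))^-1
        - n%:R * (supnorm g0)^-1)^-1) @ \oo --> f xm.
Proof.
have [gc gp] := hg0; have [fc fp] := hf.
have [y0 [M_eq g_le]] := supnorm_attained cX x_0 gc (fun x => ltW (gp x)).
have [xm xm_pk xm_max] :=
  closed_argmax cX (closed_pk gc) (ex_intro _ y0 (esym M_eq)) fc.
exists xm => //; rewrite -[f xm]invrK.
apply: cvgV; first by rewrite invr_neq0 // gt_eqF.
pose phi x := (g0 x)^-1 - (supnorm g0)^-1.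
have phi0_pk x : phi x = 0 -> pk g0 x.
  by move=> /eqP; rewrite subr_eq0 => /eqP /invr_inj.
apply: (@penalty_limit R X cX phi (fun x => (f x)^-1)).
- by move=> x; apply: cvgB; [exact: (pos_cont_inv hg0).1 | exact: cvg_cst].
- exact: (pos_cont_inv hf).1.
- by move=> x; rewrite subr_ge0 M_eq lef_pV2 ?posrE.
- by rewrite /phi xm_pk subrr.
- by move=> x /phi0_pk /xm_max; rewrite lef_pV2 ?posrE.
- by move=> n; exact: (shifted_min_repr cX x_0 (supnorm g0)^-1 n hg0 hf).
Qed.
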